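(* Let $X$ be a random variable with distribution $P$ on $\mathbb{Z}_+$ and mean $\lambda>0$, and let $\mathrm{Po}_\lambda(x)=e^{-\lambda}\lambda^x/x!$. Let $\mu=\sum_{x\ge0}\sqrt{P(x)\mathrm{Po}_\lambda(x)}$. Then $1-\mu^2\le K(X)$, and consequently $$\sum_{x\ge0}\Big(\sqrt{P(x)}-\sqrt{\mathrm{Po}_\lambda(x)}\Big)^2=2-2\mu\le 2K(X).$$
   Context: For $X$ with distribution $P$ on $\mathbb{Z}_+$ and mean $\lambda>0$, the scaled Fisher information is $K(X)=\lambda\sum_{x\ge0}\frac{\big(\frac{(x+1)P(x+1)}{\lambda}-P(x)\big)^2}{P(x)}$ (equivalently $\lambda E[\rho_X(X)^2]$ with $\rho_X(x)=\frac{(x+1)P(x+1)}{\lambda P(x)}-1$), with conventions $0/0=0$, $c/0=\infty$ for $c>0$. *)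

From Stdlib Require Import Reals Lra ClassicalDescription.
From Coquelicot Require Import Coquelicot.
Open Scope R_scope.

Definition Po (lam : R) (x : nat) : R := exp (- lam) * lam ^ x / INR (Factorial.fact x).

Definition is_pmf_mean (P : nat -> R) (lam : R) : Prop :=
  (forall x, 0 <= P x) /\ is_series P 1 /\ is_series (fun x => INR x * P x) lam.

(* Summand of K(X)/lam, with 0/0 = 0 (finite part; the c/0 case is
   handled in scaledFisher). *)
Definition fisher_term (P : nat -> R) (lam : R) (x : nat) : R :=
  if Req_EM_T (P x) 0 then 0
  else ((INR (x + 1) * P (x + 1)%nat / lam - P x) ^ 2) / P x.

(* Scaled Fisher information K(X) as an extended real:
   +oo if some term is c/0 with c > 0 (i.e. P x = 0 and P (x+1) <> 0),
   +oo if the (nonnegative) series diverges, otherwise lam * sum. *)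
Definition scaledFisher (P : nat -> R) (lam : R) : Rbar :=
  if excluded_middle_informative (exists x : nat, P x = 0 /\ P (x + 1)%nat <> 0)
  then p_infty
  else if excluded_middle_informative (ex_series (fisher_term P lam))
       then Finite (lam * Series (fisher_term P lam))
       else p_infty.

Definition hell_aff (P : nat -> R) (lam : R) : R :=
  Series (fun x => sqrt (P x * Po lam x)).

(* Write q = Po_lam and g = sqrt (P / q), so that E_q g^2 = 1 and E_q g = mu.
   The Poisson Poincare inequality Var_q g <= lam * E_q (g (k+1) - g k)^2 gives
   1 - mu^2 <= lam * sum_k q k (g (k+1) - g k)^2, and each summand is at most
   the corresponding Fisher term.  The Poincare inequality is proved on the
   truncations {0, ..., N-1}, for any weights p with (k+1) p (k+1) = lam p k:
   the variance is a sum over pairs x < y of p x p y (g y - g x)^2; Cauchy-Schwarz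
   along the path x -> x+1 -> ... -> y bounds each square by the unit increments,
   and the recursion shows that the pairs whose path crosses the edge k -> k+1
   carry total weight at most lam * p k * sum p.  Finally 0 <= mu <= 1 gives
   2 - 2 mu <= 2 (1 - mu^2). *)

From Stdlib Require Import Reals Lra ClassicalDescription.
From Coquelicot Require Import Coquelicot.
From mathcomp Require all_boot all_order all_algebra ring lra Rstruct.
Open Scope R_scope.

Module PoissonPoincare.
Import all_boot all_order all_algebra ring lra Rstruct.
Import Order.TTheory GRing.Theory Num.Theory.

Section Finite.
Local Open Scope ring_scope.
Variable R : realFieldType.
Implicit Types (p g d : nat -> R).

Lemma variance_sum_pairs p g N :
  (\sum_(0 <= x < N) p x * g x ^+ 2) * (\sum_(0 <= x < N) p x)
    - (\sum_(0 <= x < N) p x * g x) ^+ 2 =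
  \sum_(0 <= y < N) \sum_(0 <= x < y) p x * p y * (g y - g x) ^+ 2.
Proof.
elim: N => [|N IH]; first by rewrite !big_geq //; ring.
rewrite !big_nat_recr //= -IH.
have -> : \sum_(0 <= x < N) p x * p N * (g N - g x) ^+ 2 =
    p N * (\sum_(0 <= x < N) p x * g x ^+ 2) + p N * g N ^+ 2 * (\sum_(0 <= x < N) p x)
    - 2 * p N * g N * (\sum_(0 <= x < N) p x * g x).
  by rewrite !mulr_sumr -big_split -sumrB /=; apply: eq_bigr => i _; ring.
ring.
Qed.

Lemma sqr_sum_nat_le d m n :
  (\sum_(m <= i < n) d i) ^+ 2 <= (n - m)%:R * \sum_(m <= i < n) d i ^+ 2.
Proof.
rewrite -[m]add0n !big_addn -subr_ge0.
have := variance_sum_pairs (fun=> 1) (fun i => d (i + m)) (n - m).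
rewrite sumr_const_nat subn0 add0n.
have mul1 (F : nat -> R) k : \sum_(0 <= i < k) 1 * F i = \sum_(0 <= i < k) F i.
  by apply: eq_bigr => i _; rewrite mul1r.
rewrite (mul1 (fun i => d (i + m) ^+ 2)) (mul1 (fun i => d (i + m))) mulrC => ->.
by do 2 (apply: sumr_ge0 => ? _); rewrite !mul1r sqr_ge0.
Qed.

Lemma sqr_diff_le_path g x y : (x <= y)%N ->
  (g y - g x) ^+ 2 <= (y%:R - x%:R) * \sum_(x <= k < y) (g k.+1 - g k) ^+ 2.
Proof.
move=> xy; rewrite -natrB // -(telescope_sumr _ xy).
exact: sqr_sum_nat_le.
Qed.

Lemma big_nat_zero_tail {G : nat -> R} {n N} : (n <= N)%N ->
  (forall i, (n <= i)%N -> G i = 0) -> \sum_(0 <= i < n) G i = \sum_(0 <= i < N) G i.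
Proof.
move=> nN G0; rewrite (big_cat_nat (leq0n n) nN) /= [X in _ + X]big_nat_cond [X in _ + X]big1 ?addr0 //.
by move=> i /andP[/andP[/G0 ->]].
Qed.

Lemma big_nat_mkcond_range (G : nat -> R) m n N : (n <= N)%N ->
  \sum_(m <= i < n) G i = \sum_(0 <= i < N) (if (m <= i < n)%N then G i else 0).
Proof.
move=> nN; rewrite (big_nat_widen _ _ _ _ _ nN) (big_nat_widenl _ _ _ _ _ (leq0n m)) big_mkcond.
by apply: eq_bigr => i _; rewrite andTb andbC.
Qed.

Lemma sum_paths_exchange (F : nat -> nat -> nat -> R) N :
  \sum_(0 <= y < N) \sum_(0 <= x < y) \sum_(x <= k < y) F x y k =
  \sum_(0 <= k < N) \sum_(0 <= x < k.+1) \sum_(k.+1 <= y < N) F x y k.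
Proof.
pose I x y k := if (x <= k < y)%N then F x y k else 0.
transitivity (\sum_(0 <= y < N) \sum_(0 <= x < N) \sum_(0 <= k < N) I x y k).
  apply: eq_big_nat => y /andP[_ /ltnW yN].
  rewrite -(big_nat_zero_tail yN) => [|x yx]; last first.
    apply: big1 => k _; rewrite /I; case: ifP => // /andP[xk ky].
    by move: (leq_trans yx xk); rewrite leqNgt ky.
  by apply: eq_bigr => x _; exact: big_nat_mkcond_range.
transitivity (\sum_(0 <= k < N) \sum_(0 <= x < N) \sum_(0 <= y < N) I x y k); last first.
  apply: eq_big_nat => k /andP[_ kN].
  rewrite -(big_nat_zero_tail kN) => [|x kx]; last first.
    by apply: big1 => y _; rewrite /I (leqNgt x k) kx.
  apply: eq_big_nat => x /andP[_]; rewrite ltnS => xk.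
  rewrite [RHS](big_nat_mkcond_range _ _ _ _ (leqnn N)); apply: eq_big_nat => y /andP[_ yN].
  by rewrite /I xk yN andbT.
rewrite exchange_big_nat [RHS]exchange_big_nat; apply: eq_bigr => x _.
exact: exchange_big_nat.
Qed.

Section PoissonRecursion.
Variables (p : nat -> R) (lam : R).
Hypotheses (lam_ge0 : 0 <= lam) (p_ge0 : forall i, 0 <= p i).
Hypothesis p_rec : forall n, n.+1%:R * p n.+1 = lam * p n.

Lemma sum_shift_mean m n :
  \sum_(m.+1 <= i < n.+1) i%:R * p i = lam * \sum_(m <= i < n) p i.
Proof. by rewrite big_add1 /= mulr_sumr; apply: eq_bigr => i _; exact: p_rec. Qed.

Definition crossing_weight N k :=
  \sum_(0 <= x < k.+1) \sum_(k.+1 <= y < N) p x * p y * (y%:R - x%:R).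

Lemma crossing_weight_le N k :
  crossing_weight N k <= lam * p k * \sum_(0 <= x < N) p x.
Proof.
have sum_p_ge0 m n : 0 <= \sum_(m <= i < n) p i by exact: sumr_ge0.
have [Nk|kN] := leqP N k.
  rewrite /crossing_weight big1 => [|x _]; last by rewrite big_geq // leqW.
  by rewrite mulr_ge0 // mulr_ge0.
case: N kN => // n; rewrite ltnS => kn.
have -> : crossing_weight n.+1 k =
    (\sum_(0 <= x < k.+1) p x) * (\sum_(k.+1 <= y < n.+1) y%:R * p y)
  - (\sum_(0 <= x < k.+1) x%:R * p x) * (\sum_(k.+1 <= y < n.+1) p y).
  rewrite /crossing_weight !mulr_suml -sumrB; apply: eq_bigr => x _.
  by rewrite !mulr_sumr -sumrB; apply: eq_bigr => y _; ring.
set A := \sum_(0 <= i < k) p i; set B := \sum_(k <= i < n) p i.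
set C := \sum_(k.+1 <= i < n.+1) p i.
have mean_lo : \sum_(0 <= x < k.+1) x%:R * p x = lam * A.
  by rewrite big_ltn // mulr0n mul0r add0r sum_shift_mean.
have lo : \sum_(0 <= x < k.+1) p x = A + p k by rewrite big_nat_recr.
have hi : p k + C = B + p n by rewrite -big_ltn 1?big_nat_recr.
have tot : \sum_(0 <= x < n.+1) p x = A + (B + p n).
  by rewrite (big_cat_nat (leq0n k) (ltnW (kn : k < n.+1)%N)) big_nat_recr.
have -> : C = B + p n - p k by rewrite -hi; ring.
rewrite sum_shift_mean mean_lo lo tot.
have := mulr_ge0 (mulr_ge0 lam_ge0 (sum_p_ge0 0 k)) (p_ge0 n).
have := mulr_ge0 (mulr_ge0 lam_ge0 (p_ge0 k)) (p_ge0 n).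
rewrite -/A -/B; lra.
Qed.

Lemma poisson_poincare_finite g N :
  (\sum_(0 <= x < N) p x * g x ^+ 2) * (\sum_(0 <= x < N) p x)
    - (\sum_(0 <= x < N) p x * g x) ^+ 2 <=
  lam * (\sum_(0 <= x < N) p x) * \sum_(0 <= k < N) p k * (g k.+1 - g k) ^+ 2.
Proof.
rewrite variance_sum_pairs; set h := fun k => (g k.+1 - g k) ^+ 2.
apply: (@le_trans _ _ (\sum_(0 <= y < N) \sum_(0 <= x < y) \sum_(x <= k < y)
                          p x * p y * (y%:R - x%:R) * h k)).
  apply: ler_sum_nat => y _; apply: ler_sum_nat => x /andP[_ /ltnW xy].
  rewrite -mulr_sumr -[leRHS]mulrA; apply: ler_wpM2l; first exact: mulr_ge0.
  exact: sqr_diff_le_path.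
rewrite sum_paths_exchange mulr_sumr; apply: ler_sum_nat => k _.
have -> : \sum_(0 <= x < k.+1) \sum_(k.+1 <= y < N) p x * p y * (y%:R - x%:R) * h k =
    crossing_weight N k * h k.
  by rewrite /crossing_weight mulr_suml; apply: eq_bigr => x _; rewrite mulr_suml.
rewrite (_ : lam * _ * _ = lam * p k * (\sum_(0 <= x < N) p x) * h k); last by rewrite /h; ring.
by apply: ler_wpM2r; [exact: sqr_ge0 | exact: crossing_weight_le].
Qed.

End PoissonRecursion.

End Finite.

Lemma sum_nE (F : nat -> R) N : sum_n F N = (\sum_(0 <= i < N.+1) F i)%R.
Proof.
elim: N => [|N IH]; first by rewrite sum_O big_nat1.
by rewrite sum_Sn IH (big_nat_recr N.+1).
Qed.

Lemma poisson_poincare_sum_n (q g : nat -> R) lam N : 0 <= lam -> (forall k, 0 <= q k) ->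
  (forall n, INR (S n) * q (S n) = lam * q n) ->
  sum_n (fun x => q x * g x ^ 2) N * sum_n q N - sum_n (fun x => q x * g x) N ^ 2
  <= lam * sum_n q N * sum_n (fun k => q k * (g (S k) - g k) ^ 2) N.
Proof.
move=> /RleP lam0 q0 q_rec; rewrite !sum_nE RpowE; apply/RleP.
under eq_bigr do rewrite RpowE.
under [X in (_ <= _ * X)%O]eq_bigr do rewrite RpowE.
apply: poisson_poincare_finite => // [k|n]; first exact/RleP.
by rewrite -INRE.
Qed.

End PoissonPoincare.

Lemma Po_pos lam x : 0 < lam -> 0 < Po lam x.
Proof.
intros hl; unfold Po. apply Rdiv_lt_0_compat.
- apply Rmult_lt_0_compat; [apply exp_pos | apply pow_lt; exact hl].
- apply INR_fact_lt_0.
Qed.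

Lemma Po_succ lam n : INR (S n) * Po lam (S n) = lam * Po lam n.
Proof.
unfold Po. rewrite fact_simpl, mult_INR. simpl pow.
field. split; [apply INR_fact_neq_0 | apply not_0_INR; discriminate].
Qed.

Lemma is_series_Po lam : is_series (Po lam) 1.
Proof.
pose proof (is_series_scal (exp (- lam)) _ _ (is_exp_Reals lam)) as H.
replace 1 with (scal (exp (- lam)) (exp lam)).
2:{ unfold scal; simpl; unfold mult; simpl. rewrite <- exp_plus. now rewrite Rplus_opp_l, exp_0. }
eapply is_series_ext; [|exact H].
intros n; simpl. rewrite pow_n_pow. unfold scal; simpl; unfold mult; simpl.
unfold Po, Rdiv. ring.
Qed.

Lemma sum_n_nonneg (a : nat -> R) N : (forall n, 0 <= a n) -> 0 <= sum_n a N.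
Proof.
intros a0. rewrite <- (Rmult_0_r (INR (S N - 0))), <- sum_n_m_const.
now apply sum_n_m_le.
Qed.

Lemma is_series_nonneg (a : nat -> R) l : (forall n, 0 <= a n) -> is_series a l -> 0 <= l.
Proof.
intros a0 Ha.
apply (is_lim_seq_le (fun _ => 0) (sum_n a) 0 l); [|apply is_lim_seq_const|exact Ha].
intros N; now apply sum_n_nonneg.
Qed.

Lemma sqrt_mult_le_avg a b : 0 <= a -> 0 <= b -> sqrt (a * b) <= (a + b) / 2.
Proof.
intros ha hb. rewrite sqrt_mult by lra.
pose proof (sqrt_sqrt a ha). pose proof (sqrt_sqrt b hb).
pose proof (pow2_ge_0 (sqrt a - sqrt b)). nra.
Qed.

Lemma ex_series_sqrt_mult (a b : nat -> R) :
  (forall n, 0 <= a n) -> (forall n, 0 <= b n) -> ex_series a -> ex_series b ->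
  ex_series (fun n => sqrt (a n * b n)).
Proof.
intros a0 b0 [la Ha] [lb Hb].
apply (@ex_series_le R_AbsRing R_CompleteNormedModule _ (fun n => (a n + b n) / 2)).
- intros n. unfold norm; simpl; unfold abs; simpl.
  rewrite Rabs_pos_eq by apply sqrt_pos. now apply sqrt_mult_le_avg.
- exists ((la + lb) / 2). exact (is_series_scal_r (/ 2) _ _ (is_series_plus _ _ _ _ Ha Hb)).
Qed.

Lemma mul_sqr_sqrt_div a b : 0 <= a -> 0 < b -> b * sqrt (a / b) ^ 2 = a.
Proof.
intros ha hb. rewrite pow2_sqrt by (apply Rdiv_le_0_compat; lra). field. lra.
Qed.

Lemma mul_sqrt_div a b : 0 <= a -> 0 < b -> b * sqrt (a / b) = sqrt (a * b).
Proof.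
intros ha hb.
replace (a * b) with (a / b * (b * b)) by (field; lra).
rewrite sqrt_mult, sqrt_square; try lra.
- apply Rdiv_le_0_compat; lra.
- apply Rmult_le_pos; lra.
Qed.

(* With [a, b] the square roots of [P/Po] at [k+1, k], the Poisson recursion
   turns the numerator of the Fisher term into [Po k * (a^2 - b^2)], so the
   term equals [Po k * (a - b)^2 * ((a + b) / b)^2]. *)
Lemma fisher_term_ge (P : nat -> R) lam k : 0 < lam -> (forall x, 0 <= P x) ->
  (P k = 0 -> P (k + 1)%nat = 0) ->
  Po lam k * (sqrt (P (S k) / Po lam (S k)) - sqrt (P k / Po lam k)) ^ 2
  <= fisher_term P lam k.
Proof.
intros hl hP hsupp. unfold fisher_term. rewrite Nat.add_1_r in *.
pose proof (Po_pos lam k hl) as hq. pose proof (Po_pos lam (S k) hl) as hq1.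
destruct (Req_EM_T (P k) 0) as [e|ne].
{ rewrite e, (hsupp e). unfold Rdiv. rewrite !Rmult_0_l, sqrt_0. lra. }
set (a := sqrt (P (S k) / Po lam (S k))).
set (b := sqrt (P k / Po lam k)).
assert (ha : 0 <= a) by apply sqrt_pos.
assert (hb : 0 < b) by (apply sqrt_lt_R0, Rdiv_lt_0_compat; [pose proof (hP k)|]; lra).
assert (ea : P (S k) = Po lam (S k) * a ^ 2) by (symmetry; apply mul_sqr_sqrt_div; auto).
assert (eb : P k = Po lam k * b ^ 2) by (symmetry; apply mul_sqr_sqrt_div; auto).
replace (INR (S k) * P (S k) / lam - P k) with (Po lam k * (a ^ 2 - b ^ 2))
  by (rewrite ea, eb, <- Rmult_assoc, Po_succ; field; lra).
rewrite eb.
replace ((Po lam k * (a ^ 2 - b ^ 2)) ^ 2 / (Po lam k * b ^ 2)) with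
  (Po lam k * (a - b) ^ 2 + Po lam k * (a - b) ^ 2 * (a * (a + 2 * b)) / b ^ 2)
  by (field; lra).
assert (0 <= Po lam k * (a - b) ^ 2 * (a * (a + 2 * b)) / b ^ 2).
{ apply Rdiv_le_0_compat; [|apply pow_lt; lra].
  apply Rmult_le_pos; [apply Rmult_le_pos; [lra|apply pow2_ge_0]|nra]. }
lra.
Qed.

Lemma is_series_hell_aff (P : nat -> R) lam : 0 < lam -> is_pmf_mean P lam ->
  is_series (fun x => sqrt (P x * Po lam x)) (hell_aff P lam).
Proof.
intros hl (P0 & HP1 & _). apply Series_correct, ex_series_sqrt_mult; auto.
- intros n; left; now apply Po_pos.
- now exists 1.
- exists 1; apply is_series_Po.
Qed.

Lemma is_series_hellinger (P : nat -> R) lam : 0 < lam -> is_pmf_mean P lam ->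
  is_series (fun x => (sqrt (P x) - sqrt (Po lam x)) ^ 2) (2 - 2 * hell_aff P lam).
Proof.
intros hl hP. pose proof hP as (P0 & HP1 & _).
pose proof (is_series_minus _ _ _ _ (is_series_plus _ _ _ _ HP1 (is_series_Po lam))
              (is_series_scal_l 2 _ _ (is_series_hell_aff P lam hl hP))) as H.
replace (2 - 2 * hell_aff P lam) with (plus (plus 1 1) (opp (2 * hell_aff P lam))).
2:{ unfold plus, opp; simpl. lra. }
eapply is_series_ext; [|exact H].
intros n; unfold plus, opp, scal; simpl; unfold mult; simpl.
pose proof (sqrt_sqrt _ (P0 n)). pose proof (sqrt_sqrt _ (Rlt_le _ _ (Po_pos lam n hl))).
rewrite sqrt_mult by (try apply P0; left; apply Po_pos; auto). nra.
Qed.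

Lemma hell_aff_fisher_bound (P : nat -> R) lam : 0 < lam -> is_pmf_mean P lam ->
  (forall x, P x = 0 -> P (x + 1)%nat = 0) -> ex_series (fisher_term P lam) ->
  1 - hell_aff P lam ^ 2 <= lam * Series (fisher_term P lam).
Proof.
intros hl hP hsupp hK. pose proof hP as (P0 & HP1 & _).
set (q := Po lam).
set (g := fun x => sqrt (P x / q x)).
assert (q0 : forall x, 0 < q x) by (intros; apply Po_pos; auto).
assert (Hg2 : is_series (fun x => q x * g x ^ 2) 1).
{ eapply is_series_ext; [|exact HP1]. intros n. symmetry; now apply mul_sqr_sqrt_div. }
assert (Hg : is_series (fun x => q x * g x) (hell_aff P lam)).
{ eapply is_series_ext; [|exact (is_series_hell_aff P lam hl hP)].
  intros n. symmetry; now apply mul_sqrt_div. }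
assert (Hle : Rbar_le (1 * 1 - hell_aff P lam * hell_aff P lam)
                      (lam * 1 * Series (fisher_term P lam))).
{ apply (is_lim_seq_le
    (fun N => sum_n (fun x => q x * g x ^ 2) N * sum_n q N - sum_n (fun x => q x * g x) N ^ 2)
    (fun N => lam * sum_n q N * sum_n (fisher_term P lam) N)).
  - intros N. eapply Rle_trans.
    + apply (PoissonPoincare.poisson_poincare_sum_n q g lam N); [lra | intros; now left | apply Po_succ].
    + apply Rmult_le_compat_l.
      * apply Rmult_le_pos; [lra|]. apply sum_n_nonneg; intros; now left.
      * apply sum_n_m_le; intros k. apply fisher_term_ge; auto.
  - apply is_lim_seq_minus'.
    + exact (is_lim_seq_mult' _ _ _ _ Hg2 (is_series_Po lam)).
    + eapply is_lim_seq_ext; [|exact (is_lim_seq_mult' _ _ _ _ Hg Hg)].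
      intros n; simpl; now rewrite Rmult_1_r.
  - apply is_lim_seq_mult'; [|exact (Series_correct _ hK)].
    exact (is_lim_seq_mult' _ _ _ _ (is_lim_seq_const lam) (is_series_Po lam)). }
simpl in Hle. lra.
Qed.

Lemma scaledFisher_ge_hellinger (P : nat -> R) lam : 0 < lam -> is_pmf_mean P lam ->
  Rbar_le (1 - hell_aff P lam ^ 2) (scaledFisher P lam).
Proof.
intros hl hP. unfold scaledFisher.
destruct (excluded_middle_informative _) as [hsupp|hsupp]; [exact I|].
destruct (excluded_middle_informative _) as [hK|hK]; [|exact I].
apply hell_aff_fisher_bound; auto.
intros x e. destruct (Req_EM_T (P (x + 1)%nat) 0) as [e'|e']; auto.
exfalso; apply hsupp; now exists x.
Qed.

Lemma Rbar_le_mult_pos (c a : R) (K : Rbar) : 0 < c -> Rbar_le a K ->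
  Rbar_le (c * a) (Rbar_mult c K).
Proof.
intros hc. destruct K as [K| |]; simpl; try contradiction.
- intros; now apply Rmult_le_compat_l; [lra|].
- intros _. destruct (Rle_dec 0 c) as [c0|]; [|lra].
  destruct (Rle_lt_or_eq_dec 0 c c0); [exact I|lra].
Qed.

Theorem mainTheorem5 (P : nat -> R) (lam : R) :
  0 < lam -> is_pmf_mean P lam ->
  Rbar_le (Finite (1 - (hell_aff P lam) ^ 2)) (scaledFisher P lam) /\
  is_series (fun x => (sqrt (P x) - sqrt (Po lam x)) ^ 2) (2 - 2 * hell_aff P lam) /\
  Rbar_le (Finite (2 - 2 * hell_aff P lam)) (Rbar_mult 2 (scaledFisher P lam)).
Proof.
intros hl hP.
pose proof (scaledFisher_ge_hellinger P lam hl hP) as HK.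
pose proof (is_series_hellinger P lam hl hP) as HH.
split; [exact HK|]. split; [exact HH|].
assert (mu0 : 0 <= hell_aff P lam)
  by exact (is_series_nonneg _ _ (fun _ => sqrt_pos _) (is_series_hell_aff P lam hl hP)).
assert (mu1 : 0 <= 2 - 2 * hell_aff P lam)
  by exact (is_series_nonneg _ _ (fun _ => pow2_ge_0 _) HH).
apply (Rbar_le_trans _ (2 * (1 - hell_aff P lam ^ 2))).
- simpl; nra.
- now apply Rbar_le_mult_pos; [lra|].
Qed.
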